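(* Let $P=P_0+P_\delta\in\mathbb{R}^{p\times m}$, $Y_d\in\mathbb{R}^p$, plant $Y_k=PU_k+N_k$, $E_k=Y_d-Y_k$, $\bar U_k=-\Delta U_k$, $D_k=-\Delta N_k$, $\mathcal D_k=D_k+P_\delta\bar U_k$ (so $E_{k+1}=E_k+P_0\bar U_k+\mathcal D_k$), $\bar B_0=\begin{bmatrix}P_0\\0\end{bmatrix}$, $\bar L\in\mathbb{R}^{2p\times p}$, and the ESO $\hat{\bar{\mathcal X}}_{k+1}=(\bar A-\bar L\bar C)\hat{\bar{\mathcal X}}_k+\bar B_0\bar U_k+\bar LE_k$, $\hat{\bar{\mathcal X}}_k=\begin{bmatrix}\hat E_k\\\hat{\mathcal D}_k\end{bmatrix}$. Let $K\in\mathbb{R}^{m\times p}$, $\bar H\in\mathbb{R}^{p\times p}$, and apply $\bar U_k=-K(E_k+\bar H\hat{\mathcal D}_k)$. Then $\begin{bmatrix}E_{k+1}\\\hat{\bar{\mathcal X}}_{k+1}\end{bmatrix}=G\begin{bmatrix}E_{k}\\\hat{\bar{\mathcal X}}_{k}\end{bmatrix}+\begin{bmatrix}I\\0\end{bmatrix}\mathcal D_k$ with $G=\begin{bmatrix}I-P_0K&-P_0K\bar HF\\\bar L-\bar B_0K&\bar A-\bar L\bar C-\bar B_0K\bar HF\end{bmatrix}$, and with $T=\begin{bmatrix}I&0\\-\bar C^{\top}&I\end{bmatrix}$ one has $TGT^{-1}=\begin{bmatrix}I-P_0K&-P_0K\bar HF\\0&\bar A-\bar L\bar C\end{bmatrix}$.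 Hence the separation principle holds: the eigenvalues of $G$ are those of $I-P_0K$ together with those of $\bar A-\bar L\bar C$, and $K$, $\bar H$, $\bar L$ can be designed separately.
   Context: $\mathbb{Z}_+=\{0,1,2,\dots\}$; $\Delta f_k=f_{k+1}-f_k$. $U_k\in\mathbb{R}^m$ input, $Y_k\in\mathbb{R}^p$ output, $(N_k)\subset\mathbb{R}^p$ a bounded uncertainty; $P_0$ is a known nominal model and $P_\delta$ an unknown model uncertainty. $\bar A=\begin{bmatrix}I_p&I_p\\0&I_p\end{bmatrix}$, $\bar C=\begin{bmatrix}I_p&0\end{bmatrix}$, $F=\begin{bmatrix}0&I_p\end{bmatrix}$. *)

From HB Require Import structures.
From mathcomp Require Import all_boot all_order all_algebra.
Set Implicit Arguments. Unset Strict Implicit. Unset Printing Implicit Defensive.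
Import Order.TTheory GRing.Theory Num.Theory.
Local Open Scope ring_scope.

Section Defs.
Variables (R : realFieldType) (p m : nat).

Definition Abar : 'M[R]_(p + p) := block_mx 1%:M 1%:M 0 1%:M.
Definition Cbar : 'M[R]_(p, p + p) := row_mx 1%:M 0.
Definition Fsel : 'M[R]_(p, p + p) := row_mx 0 1%:M.
Definition Bbar0 (P0 : 'M[R]_(p, m)) : 'M[R]_(p + p, m) := col_mx P0 0.

Definition Yout (P0 Pd : 'M[R]_(p, m)) (U : nat -> 'cV[R]_m) (N : nat -> 'cV[R]_p)
  (k : nat) : 'cV[R]_p := (P0 + Pd) *m U k + N k.
Definition Err P0 Pd (Yd : 'cV[R]_p) U N k : 'cV[R]_p := Yd - Yout P0 Pd U N k.
Definition Ubar (U : nat -> 'cV[R]_m) k : 'cV[R]_m := - (U k.+1 - U k).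
Definition Dn (N : nat -> 'cV[R]_p) k : 'cV[R]_p := - (N k.+1 - N k).
Definition Dcal (Pd : 'M[R]_(p, m)) U N k : 'cV[R]_p := Dn N k + Pd *m Ubar U k.

Definition Gcl (P0 : 'M[R]_(p, m)) (Lbar : 'M[R]_(p + p, p)) (K : 'M[R]_(m, p))
  (Hbar : 'M[R]_p) : 'M[R]_(p + (p + p)) :=
  block_mx (1%:M - P0 *m K) (- (P0 *m K *m Hbar *m Fsel))
           (Lbar - Bbar0 P0 *m K) (Abar - Lbar *m Cbar - Bbar0 P0 *m K *m Hbar *m Fsel).

Definition Tsim : 'M[R]_(p + (p + p)) := block_mx 1%:M 0 (- Cbar^T) 1%:M.
End Defs.

(* Since B0 = C^T P0, F C^T = 0, C C^T = I and A C^T = C^T, the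
   change of coordinates T (which replaces the observer state by its
   estimation error with respect to E) intertwines G with a block upper
   triangular matrix: T G = Gt T. *)

From HB Require Import structures.
From mathcomp Require Import all_boot all_order all_algebra ring.
Set Implicit Arguments. Unset Strict Implicit. Unset Printing Implicit Defensive.
Import Order.TTheory GRing.Theory Num.Theory.
Local Open Scope ring_scope.

Lemma char_poly_conj (R : comUnitRingType) n (T A : 'M[R]_n) :
  T \in unitmx -> char_poly (T *m A *m invmx T) = char_poly A.
Proof.
move=> uT; rewrite /char_poly.
set Tp := map_mx polyC T; set Tip := map_mx polyC (invmx T).
have TTip : Tp *m Tip = 1%:M by rewrite -map_mxM mulmxV ?map_mx1.
have -> : char_poly_mx (T *m A *m invmx T) = Tp *m char_poly_mx A *m Tip.
  rewrite /char_poly_mx !map_mxM mulmxBr mulmxBl scalar_mxC.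
  by rewrite -[_ *m Tp *m Tip]mulmxA TTip mulmx1.
by rewrite !det_mulmx mulrAC -det_mulmx TTip det1 mul1r.
Qed.

Lemma char_poly_ublock (R : comNzRingType) n1 n2
    (A : 'M[R]_n1) (B : 'M[R]_(n1, n2)) (D : 'M[R]_n2) :
  char_poly (block_mx A B 0 D) = char_poly A * char_poly D.
Proof.
rewrite /char_poly /char_poly_mx map_block_mx scalar_mx_block.
by rewrite opp_block_mx add_block_mx map_mx0 oppr0 addr0 det_ublock.
Qed.

Section ErrorDynamics.
Variables (R : realFieldType) (p m : nat) (P0 Pd : 'M[R]_(p, m)).
Variables (Yd : 'cV[R]_p) (U : nat -> 'cV[R]_m) (N : nat -> 'cV[R]_p).

Lemma Err_succ k :
  Err P0 Pd Yd U N k.+1 = Err P0 Pd Yd U N k + P0 *m Ubar U k + Dcal Pd U N k.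
Proof.
rewrite /Err /Yout /Dcal /Dn /Ubar !mulmxN !mulmxBr !mulmxDl.
move: (P0 *m U k) (P0 *m U k.+1) (Pd *m U k) (Pd *m U k.+1) (N k) (N k.+1).
by move=> a b c d e f; apply/matrixP => i j; rewrite !mxE; ring.
Qed.

End ErrorDynamics.

Section SeparationPrinciple.
Variables (R : realFieldType) (p m : nat) (P0 : 'M[R]_(p, m)).
Variables (Lbar : 'M[R]_(p + p, p)) (K : 'M[R]_(m, p)) (Hbar : 'M[R]_p).

Local Notation A := (Abar R p).
Local Notation C := (Cbar R p).
Local Notation F := (Fsel R p).
Local Notation G := (Gcl P0 Lbar K Hbar).
Local Notation T := (Tsim R p).

Lemma trCbar : C^T = col_mx 1%:M 0.
Proof. by rewrite tr_row_mx trmx1 trmx0. Qed.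

Lemma Fsel_trCbar : F *m C^T = 0.
Proof. by rewrite trCbar mul_row_col mul0mx mulmx0 addr0. Qed.

Lemma Cbar_trCbar : C *m C^T = 1%:M.
Proof. by rewrite trCbar mul_row_col mul1mx mulmx0 addr0. Qed.

Lemma Abar_trCbar : A *m C^T = C^T.
Proof. by rewrite trCbar mul_block_col !mul1mx !mul0mx !addr0. Qed.

Lemma Bbar0E : Bbar0 P0 = C^T *m P0.
Proof. by rewrite trCbar mul_col_mx mul1mx mul0mx. Qed.

Lemma mul_Gcl_col_mx (E : 'cV[R]_p) (X : 'cV[R]_(p + p)) (u : 'cV[R]_m) :
    u = - (K *m (E + Hbar *m (F *m X))) ->
  G *m col_mx E X =
    col_mx (E + P0 *m u) ((A - Lbar *m C) *m X + Bbar0 P0 *m u + Lbar *m E).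
Proof.
move=> ->; rewrite mul_block_col !mulmxN !mulmxDr !mulNmx !mulmxBl !mulmxA.
rewrite mul1mx; congr col_mx.
  move: (P0 *m K *m E) (P0 *m K *m Hbar *m F *m X) => a b.
  by apply/matrixP => i j; rewrite !mxE; ring.
move: (Lbar *m E) (Bbar0 P0 *m K *m E) (A *m X) (Lbar *m C *m X).
move: (Bbar0 P0 *m K *m Hbar *m F *m X) => a b c d e.
by apply/matrixP => i j; rewrite !mxE; ring.
Qed.

Lemma Tsim_unit : T \in unitmx.
Proof. by rewrite unitmxE det_lblock !det1 mulr1 unitr1. Qed.

Lemma Tsim_Gcl :
  T *m G = block_mx (1%:M - P0 *m K) (- (P0 *m K *m Hbar *m F))
                    0 (A - Lbar *m C) *m T.
Proof.
rewrite /Tsim !mulmx_block !mul1mx !mul0mx !mulmx1 !mulmx0 !addr0 !add0r.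
have KHF_trCbar : P0 *m K *m Hbar *m F *m C^T = 0.
  by rewrite -mulmxA Fsel_trCbar mulmx0.
congr block_mx.
- by rewrite mulNmx mulmxN opprK KHF_trCbar addr0.
- rewrite mulmxN mulmxBl Abar_trCbar -mulmxA Cbar_trCbar mulmx1.
  rewrite mulNmx mulmxBr mulmx1 Bbar0E !mulmxA.
  move: (C^T *m P0 *m K) => b.
  by apply/matrixP => i j; rewrite !mxE; ring.
- rewrite Bbar0E mulNmx mulmxN opprK !mulmxA.
  move: (C^T *m P0 *m K *m Hbar *m F) => b.
  by apply/matrixP => i j; rewrite !mxE; ring.
Qed.

End SeparationPrinciple.

Theorem lemma6 (R : realFieldType) (p m : nat)
  (P0 Pd : 'M[R]_(p, m)) (Yd : 'cV[R]_p)
  (U : nat -> 'cV[R]_m) (N : nat -> 'cV[R]_p)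
  (Lbar : 'M[R]_(p + p, p)) (K : 'M[R]_(m, p)) (Hbar : 'M[R]_p)
  (Xhat : nat -> 'cV[R]_(p + p))
  (hESO : forall k, Xhat k.+1 =
     (Abar R p - Lbar *m Cbar R p) *m Xhat k + Bbar0 P0 *m Ubar U k
       + Lbar *m Err P0 Pd Yd U N k)
  (hctrl : forall k, Ubar U k =
     - (K *m (Err P0 Pd Yd U N k + Hbar *m (Fsel R p *m Xhat k)))) :
  (forall k, Err P0 Pd Yd U N k.+1 =
     Err P0 Pd Yd U N k + P0 *m Ubar U k + Dcal Pd U N k) /\
  (forall k, col_mx (Err P0 Pd Yd U N k.+1) (Xhat k.+1) =
     Gcl P0 Lbar K Hbar *m col_mx (Err P0 Pd Yd U N k) (Xhat k)
       + col_mx (Dcal Pd U N k) 0) /\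
  Tsim R p *m Gcl P0 Lbar K Hbar *m invmx (Tsim R p) =
    block_mx (1%:M - P0 *m K) (- (P0 *m K *m Hbar *m Fsel R p))
             0 (Abar R p - Lbar *m Cbar R p) /\
  char_poly (Gcl P0 Lbar K Hbar) =
    char_poly (1%:M - P0 *m K) * char_poly (Abar R p - Lbar *m Cbar R p).
Proof.
have similar : Tsim R p *m Gcl P0 Lbar K Hbar *m invmx (Tsim R p) =
    block_mx (1%:M - P0 *m K) (- (P0 *m K *m Hbar *m Fsel R p))
             0 (Abar R p - Lbar *m Cbar R p).
  by rewrite Tsim_Gcl mulmxK // Tsim_unit.
split; first exact: Err_succ.
split.
  move=> k; rewrite Err_succ hESO (mul_Gcl_col_mx P0 Lbar (hctrl k)).
  by rewrite add_col_mx addr0.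
split; first exact: similar.
by rewrite -(char_poly_conj _ (Tsim_unit R p)) similar char_poly_ublock.
Qed.
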